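(* Let $(X,\preceq,\{H_n\})$ be a half-space order and let a group $G$ act on $X$ unboundedly by quasi-automorphisms of defect bounded by $d$. Then there is a nonzero homogeneous quasimorphism $T_{(X,\preceq,\{H_n\})}:G\to\mathbb{R}$ of defect at most $2d$ such that for every $a\in X$ and $g\in G$, $$T_{(X,\preceq,\{H_n\})}(g)=\lim_{n\to\infty}\frac{h(g^na,a)}{n}.$$
   Context: A half-space filtration of $X$ is $\{H_n\}_{n\in\mathbb{Z}}$ with $H_{n+1}\subsetneq H_n$, $\bigcap H_n=\emptyset$, $\bigcup H_n=X$; height $h(a)=\sup\{n: a\in H_n\}$, $h(a,b)=h(a)-h(b)$. A half-space order $(X,\preceq,\{H_n\})$: $(X,\preceq)$ a poset, $\{H_n\}$ a half-space filtration, and for a constant $w$, $h(a,b)\geq w\Rightarrow a\succeq b$. The $G$-action is by quasi-automorphisms of defect bounded by $d$ if $|h(ga,gb)-h(a,b)|\leq d$ for all $g,a,b$; it is unbounded if there exist $g\in G$, $a\in X$ with $h(g^na)\to\pm\infty$ as $n\to\pm\infty$. A homogeneous quasimorphism is $f:G\to\mathbb{R}$ with defect $\sup_{g,k}|f(gk)-f(g)-f(k)|<\infty$ and $f(g^n)=nf(g)$ for $n\in\mathbb{N}$. *)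

From Stdlib Require Import Reals ZArith Lra Lia.
Open Scope R_scope.

Definition is_group {G : Type} (mul : G -> G -> G) (one : G) (inv : G -> G) : Prop :=
  (forall x y z, mul x (mul y z) = mul (mul x y) z) /\
  (forall x, mul one x = x) /\ (forall x, mul x one = x) /\
  (forall x, mul (inv x) x = one) /\ (forall x, mul x (inv x) = one).

Fixpoint gpow_nat {G : Type} (mul : G -> G -> G) (one : G) (g : G) (n : nat) : G :=
  match n with
  | O => one
  | S m => mul g (gpow_nat mul one g m)
  end.

Definition gpowZ {G : Type} (mul : G -> G -> G) (one : G) (inv : G -> G)
    (g : G) (n : Z) : G :=
  match n with
  | Z0 => one
  | Zpos p => gpow_nat mul one g (Pos.to_nat p)
  | Zneg p => gpow_nat mul one (inv g) (Pos.to_nat p)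
  end.

Definition is_action {G X : Type} (mul : G -> G -> G) (one : G)
    (act : G -> X -> X) : Prop :=
  (forall a, act one a = a) /\ (forall g k a, act (mul g k) a = act g (act k a)).

Definition is_half_space_filtration {X : Type} (H : Z -> X -> Prop) : Prop :=
  (forall n, (forall x, H (n + 1)%Z x -> H n x) /\ (exists x, H n x /\ ~ H (n + 1)%Z x)) /\
  (forall x, exists n, ~ H n x) /\
  (forall x, exists n, H n x).

Definition is_sup_height {X : Type} (H : Z -> X -> Prop) (a : X) (ha : Z) : Prop :=
  (forall n, H n a -> (n <= ha)%Z) /\
  (forall m, (forall n, H n a -> (n <= m)%Z) -> (ha <= m)%Z).

Definition is_height {X : Type} (H : Z -> X -> Prop) (h : X -> Z) : Prop :=
  forall a, is_sup_height H a (h a).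

Definition is_partial_order {X : Type} (le : X -> X -> Prop) : Prop :=
  (forall a, le a a) /\ (forall a b, le a b -> le b a -> a = b) /\
  (forall a b c, le a b -> le b c -> le a c).

Definition is_half_space_order {X : Type} (le : X -> X -> Prop) (H : Z -> X -> Prop)
    (h : X -> Z) : Prop :=
  is_partial_order le /\ is_half_space_filtration H /\ is_height H h /\
  exists w : Z, forall a b, (h a - h b >= w)%Z -> le b a.

Definition quasi_aut_defect_bounded {G X : Type} (act : G -> X -> X) (h : X -> Z)
    (d : R) : Prop :=
  forall g a b,
    Rabs (IZR (h (act g a) - h (act g b)) - IZR (h a - h b)) <= d.

Definition unbounded_action {G X : Type} (mul : G -> G -> G) (one : G) (inv : G -> G)
    (act : G -> X -> X) (h : X -> Z) : Prop :=
  exists g a,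
    (forall M : Z, exists N : Z, forall n : Z, (N <= n)%Z ->
        (M <= h (act (gpowZ mul one inv g n) a))%Z) /\
    (forall M : Z, exists N : Z, forall n : Z, (n <= N)%Z ->
        (h (act (gpowZ mul one inv g n) a) <= M)%Z).

Definition defect_le {G : Type} (mul : G -> G -> G) (f : G -> R) (D : R) : Prop :=
  forall g k, Rabs (f (mul g k) - f g - f k) <= D.

Definition is_homogeneous_quasimorphism {G : Type} (mul : G -> G -> G) (one : G)
    (f : G -> R) : Prop :=
  (exists D : R, defect_le mul f D) /\
  (forall (g : G) (n : nat), f (gpow_nat mul one g n) = INR n * f g).

From Stdlib Require Import Reals ZArith Lra Lia IndefiniteDescription.
Open Scope R_scope.

(** The displacement c(g, x) := h(g x) - h(x) is a cocycle, c(g k, x) = c(g, k x) + c(k, x),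
    and a quasi-automorphism of defect d makes it constant in x up to d.  Hence
    c(g^n, x) = n c(g, y) up to n d, and comparing c(g^(m n), x) with n c(g^m, x) shows that
    c(g^n, x) / n is Cauchy with a limit T(g) satisfying |c(g^n, x) - n T(g)| <= d uniformly in
    n and x.  This uniform bound yields everything: comparing c((g k)^n, x) with
    c(g^n, x) + c(k^n, x) gives defect 2 d, comparing c(g^(n m), x) in two ways gives
    homogeneity, and T(g) = 0 would keep the displacements c(g^n, a) below d, which an
    element with unbounded orbit forbids. *)

Lemma Rabs_le_iff (x a : R) : Rabs x <= a <-> - a <= x <= a.
Proof. unfold Rabs; destruct (Rcase_abs x); split; intros; lra. Qed.

Lemma INR_archimed_pos (A eps : R) :
  0 < eps -> exists N : nat, (1 <= N)%nat /\ A < INR N * eps.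
Proof.
  intros Heps. destruct (INR_archimed eps A Heps) as [N HN].
  exists (S N). split; [lia|].
  rewrite S_INR, Rmult_plus_distr_r, Rmult_1_l. lra.
Qed.

Lemma eventually_div_INR_lt (C eps : R) :
  0 < eps -> exists N : nat, (1 <= N)%nat /\ forall n, (N <= n)%nat -> C / INR n < eps.
Proof.
  intros Heps. destruct (INR_archimed_pos C eps Heps) as [N [HN HC]].
  exists N. split; [exact HN|]. intros n Hn.
  assert (Hn0 : 0 < INR n) by (apply lt_0_INR; lia).
  assert (HNn : INR N <= INR n) by (apply le_INR; lia).
  apply (Rmult_lt_reg_r (INR n)); [exact Hn0|].
  unfold Rdiv. rewrite Rmult_assoc, Rinv_l by lra. nra.
Qed.

Lemma Rle_of_scaled_bound (z C D : R) :
  (forall n : nat, (1 <= n)%nat -> INR n * z <= C + INR n * D) -> z <= D.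
Proof.
  intros Hb. destruct (Rle_or_lt z D) as [Hle | Hlt]; [exact Hle|].
  destruct (INR_archimed_pos C (z - D)) as [N [HN HC]]; [lra|].
  specialize (Hb N HN). rewrite Rmult_minus_distr_l in HC. lra.
Qed.

Lemma Rabs_sub_mul_le_div (A B D n : R) :
  0 < n -> Rabs (A - n * B) <= D <-> Rabs (A / n - B) <= D / n.
Proof.
  intros Hn.
  replace (A - n * B) with (n * (A / n - B)) by (field; lra).
  rewrite Rabs_mult, (Rabs_pos_eq n) by lra.
  replace D with (n * (D / n)) at 1 by (field; lra).
  split; intros Hle; [apply Rmult_le_reg_l with n | apply Rmult_le_compat_l]; lra.
Qed.

Lemma Un_cv_div_INR (u : nat -> R) (L C : R) :
  (forall n, Rabs (u n - INR n * L) <= C) -> Un_cv (fun n => u n / INR n) L.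
Proof.
  intros Hu eps Heps.
  destruct (eventually_div_INR_lt C eps Heps) as [N [HN Hsmall]].
  exists N. intros n Hn. unfold R_dist.
  assert (Hn0 : 0 < INR n) by (apply lt_0_INR; lia).
  apply Rle_lt_trans with (C / INR n); [|now apply Hsmall].
  now apply Rabs_sub_mul_le_div.
Qed.

(* The case [n = 0] of the hypothesis forces [u i 0 = 0], so [m = 0] needs no extra assumption. *)
Lemma uniform_slope (I : Type) (i0 : I) (u : I -> nat -> R) (D : R) :
  (forall i j m n, Rabs (u j (m * n)%nat - INR n * u i m) <= INR n * D) ->
  exists L, forall m i, Rabs (u i m - INR m * L) <= D.
Proof.
  intros Hu.
  assert (HD : 0 <= D).
  { pose proof (Hu i0 i0 1%nat 1%nat) as H1.
    rewrite Nat.mul_1_r, INR_1, !Rmult_1_l, Rminus_diag, Rabs_R0 in H1. exact H1. }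
  assert (Hzero : forall i, u i 0%nat = 0).
  { intros i. pose proof (Hu i i 0%nat 0%nat) as H0.
    rewrite Nat.mul_0_r, INR_0, !Rmult_0_l, Rminus_0_r in H0.
    apply Rabs_le_iff in H0. lra. }
  assert (Hratio : forall i j m n, (1 <= m)%nat -> (1 <= n)%nat ->
    Rabs (u j (m * n)%nat / INR (m * n) - u i m / INR m) <= D / INR m).
  { intros i j m n Hm Hn.
    assert (Hm0 : 0 < INR m) by (apply lt_0_INR; lia).
    assert (Hn0 : 0 < INR n) by (apply lt_0_INR; lia).
    rewrite mult_INR.
    replace (D / INR m) with (INR n * D / (INR m * INR n)) by (field; lra).
    apply (Rabs_sub_mul_le_div _ _ _ _ (Rmult_lt_0_compat _ _ Hm0 Hn0)).
    replace (INR m * INR n * (u i m / INR m)) with (INR n * u i m) by (field; lra).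
    apply Hu. }
  assert (Hcauchy : Cauchy_crit (fun n => u i0 n / INR n)).
  { intros eps Heps.
    destruct (eventually_div_INR_lt D (eps / 2)) as [N [HN Hsmall]]; [lra|].
    exists N. intros n m Hn Hm. unfold R_dist.
    pose proof (Hratio i0 i0 n m ltac:(lia) ltac:(lia)) as Hnm.
    pose proof (Hratio i0 i0 m n ltac:(lia) ltac:(lia)) as Hmn.
    rewrite Nat.mul_comm in Hmn.
    pose proof (Hsmall n Hn). pose proof (Hsmall m Hm).
    apply Rabs_le_iff in Hnm, Hmn. apply Rabs_def1; lra. }
  destruct (R_complete _ Hcauchy) as [L HL].
  exists L. intros [|m] i.
  - rewrite Hzero, INR_0, Rmult_0_l, Rminus_0_r, Rabs_R0. exact HD.
  - assert (Hm0 : 0 < INR (S m)) by (apply lt_0_INR; lia).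
    apply Rabs_sub_mul_le_div; [exact Hm0|].
    apply Rle_plus_epsilon. intros eps Heps.
    destruct (HL eps Heps) as [N HN].
    specialize (HN (S m * S N)%nat ltac:(nia)). unfold R_dist in HN.
    pose proof (Hratio i i0 (S m) (S N) ltac:(lia) ltac:(lia)) as Hr.
    apply Rabs_def2 in HN. apply Rabs_le_iff in Hr. apply Rabs_le_iff. lra.
Qed.

Section MonoidPowers.

Context {M : Type} (mul : M -> M -> M) (one : M).
Hypothesis mul_assoc : forall x y z, mul x (mul y z) = mul (mul x y) z.
Hypothesis mul_1l : forall x, mul one x = x.

Lemma gpow_nat_add (g : M) (a b : nat) :
  gpow_nat mul one g (a + b) = mul (gpow_nat mul one g a) (gpow_nat mul one g b).
Proof.
  induction a as [|a IH]; simpl.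
  - now rewrite mul_1l.
  - now rewrite IH, mul_assoc.
Qed.

Lemma gpow_nat_mul (g : M) (m n : nat) :
  gpow_nat mul one (gpow_nat mul one g m) n = gpow_nat mul one g (m * n).
Proof.
  induction n as [|n IH]; simpl.
  - now rewrite Nat.mul_0_r.
  - now rewrite IH, Nat.mul_succ_r, Nat.add_comm, gpow_nat_add.
Qed.

End MonoidPowers.

Lemma gpowZ_of_nat {G : Type} (mul : G -> G -> G) (one : G) (inv : G -> G) (g : G) (n : nat) :
  gpowZ mul one inv g (Z.of_nat n) = gpow_nat mul one g n.
Proof. destruct n as [|n]; [reflexivity|]. simpl. now rewrite SuccNat2Pos.id_succ. Qed.

Definition disp {G X : Type} (act : G -> X -> X) (h : X -> Z) (g : G) (x : X) : R :=
  IZR (h (act g x) - h x).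

Lemma unbounded_action_disp {G X : Type} (mul : G -> G -> G) (one : G) (inv : G -> G)
    (act : G -> X -> X) (h : X -> Z) :
  unbounded_action mul one inv act h ->
  exists g a, forall r : R, exists n : nat, r < disp act h (gpow_nat mul one g n) a.
Proof.
  intros [g [a [Hup _]]]. exists g, a. intros r.
  destruct (Hup (h a + up r)%Z) as [N HN].
  exists (Z.to_nat N).
  specialize (HN (Z.of_nat (Z.to_nat N)) ltac:(lia)).
  rewrite gpowZ_of_nat in HN.
  assert (Hup_r : IZR (up r) <= disp act h (gpow_nat mul one g (Z.to_nat N)) a).
  { unfold disp. apply IZR_le. lia. }
  destruct (archimed r). lra.
Qed.

Section Displacement.

Context {G X : Type} (mul : G -> G -> G) (one : G) (act : G -> X -> X) (h : X -> Z) (d : R).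
Hypothesis mul_assoc : forall x y z, mul x (mul y z) = mul (mul x y) z.
Hypothesis mul_1l : forall x, mul one x = x.
Hypothesis act_one : forall a, act one a = a.
Hypothesis act_mul : forall g k a, act (mul g k) a = act g (act k a).
Hypothesis quasi_aut : quasi_aut_defect_bounded act h d.

Local Notation c := (disp act h).
Local Notation pow := (gpow_nat mul one).

Lemma disp_one (x : X) : c one x = 0.
Proof. unfold disp. now rewrite act_one, Z.sub_diag. Qed.

Lemma disp_mul (g k : G) (x : X) : c (mul g k) x = c g (act k x) + c k x.
Proof. unfold disp. rewrite act_mul, <- plus_IZR. f_equal. ring. Qed.

Lemma disp_oscillation (g : G) (x y : X) : Rabs (c g x - c g y) <= d.
Proof.
  unfold disp. rewrite !minus_IZR.
  replace (IZR (h (act g x)) - IZR (h x) - (IZR (h (act g y)) - IZR (h y)))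
    with (IZR (h (act g x) - h (act g y)) - IZR (h x - h y)) by (rewrite !minus_IZR; ring).
  apply quasi_aut.
Qed.

Lemma disp_pow_deviation (p : G) (n : nat) (x y : X) :
  Rabs (c (pow p n) x - INR n * c p y) <= INR n * d.
Proof.
  revert x. induction n as [|n IH]; intros x; cbn [gpow_nat].
  - rewrite disp_one, INR_0, !Rmult_0_l, Rminus_0_r, Rabs_R0. lra.
  - rewrite disp_mul, S_INR.
    pose proof (IH x) as Hn. pose proof (disp_oscillation p (act (pow p n) x) y) as Hp.
    apply Rabs_le_iff in Hn, Hp. apply Rabs_le_iff. lra.
Qed.

Lemma disp_pow_mul_deviation (g k : G) (n : nat) (x : X) :
  Rabs (c (pow (mul g k) n) x - c (pow g n) x - c (pow k n) x) <= 2 * INR n * d.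
Proof.
  induction n as [|n IH]; cbn [gpow_nat].
  - rewrite !disp_one, INR_0, Rmult_0_r, Rmult_0_l, !Rminus_0_r, Rabs_R0. lra.
  - rewrite !disp_mul, S_INR.
    pose proof (disp_oscillation g (act k (act (pow (mul g k) n) x)) (act (pow g n) x)) as Hg.
    pose proof (disp_oscillation k (act (pow (mul g k) n) x) (act (pow k n) x)) as Hk.
    apply Rabs_le_iff in IH, Hg, Hk. apply Rabs_le_iff. lra.
Qed.

Lemma disp_slope_function (x0 : X) :
  exists T : G -> R, forall g m x, Rabs (c (pow g m) x - INR m * T g) <= d.
Proof.
  apply (functional_choice (fun g L => forall m x, Rabs (c (pow g m) x - INR m * L) <= d)).
  intros g.
  apply (uniform_slope X x0 (fun x m => c (pow g m) x)). intros x y m n.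
  rewrite <- (gpow_nat_mul mul one mul_assoc mul_1l). apply disp_pow_deviation.
Qed.

Section Slope.

Variable T : G -> R.
Hypothesis slope_bound : forall g m x, Rabs (c (pow g m) x - INR m * T g) <= d.

Lemma slope_defect (x0 : X) (g k : G) : Rabs (T (mul g k) - T g - T k) <= 2 * d.
Proof.
  apply (Rle_of_scaled_bound _ (3 * d)). intros n _.
  rewrite <- (Rabs_pos_eq (INR n)) at 1 by apply pos_INR. rewrite <- Rabs_mult.
  pose proof (slope_bound (mul g k) n x0) as Hgk.
  pose proof (slope_bound g n x0) as Hg. pose proof (slope_bound k n x0) as Hk.
  pose proof (disp_pow_mul_deviation g k n x0) as Hdev.
  apply Rabs_le_iff in Hgk, Hg, Hk, Hdev. apply Rabs_le_iff. lra.
Qed.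

Lemma slope_pow (x0 : X) (g : G) (n : nat) : T (pow g n) = INR n * T g.
Proof.
  assert (Habs : Rabs (T (pow g n) - INR n * T g) <= 0).
  { apply (Rle_of_scaled_bound _ (2 * d)). intros m _.
    rewrite <- (Rabs_pos_eq (INR m)) at 1 by apply pos_INR. rewrite <- Rabs_mult.
    pose proof (slope_bound (pow g n) m x0) as Hgn.
    rewrite (gpow_nat_mul mul one mul_assoc mul_1l) in Hgn.
    pose proof (slope_bound g (n * m) x0) as Hnm. rewrite mult_INR in Hnm.
    apply Rabs_le_iff in Hgn, Hnm. apply Rabs_le_iff. lra. }
  apply Rabs_le_iff in Habs. lra.
Qed.

Lemma slope_neq0 (g : G) (a : X) :
  (forall r : R, exists n : nat, r < c (pow g n) a) -> T g <> 0.
Proof.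
  intros Hunb HT. destruct (Hunb d) as [n Hn].
  pose proof (slope_bound g n a) as Hb.
  rewrite HT, Rmult_0_r, Rminus_0_r in Hb. apply Rabs_le_iff in Hb. lra.
Qed.

Lemma slope_limit (a : X) (g : G) :
  Un_cv (fun n : nat => IZR (h (act (pow g n) a) - h a) / INR n) (T g).
Proof. exact (Un_cv_div_INR _ _ d (fun n => slope_bound g n a)). Qed.

End Slope.

End Displacement.

Theorem corollary2p2
  (X : Type) (le : X -> X -> Prop) (H : Z -> X -> Prop) (h : X -> Z)
  (G : Type) (mul : G -> G -> G) (one : G) (inv : G -> G)
  (act : G -> X -> X) (d : R) :
  is_half_space_order le H h ->
  is_group mul one inv ->
  is_action mul one act ->
  quasi_aut_defect_bounded act h d ->
  unbounded_action mul one inv act h ->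
  exists T : G -> R,
    is_homogeneous_quasimorphism mul one T /\
    defect_le mul T (2 * d) /\
    (exists g, T g <> 0) /\
    (forall (a : X) (g : G),
        Un_cv (fun n : nat => IZR (h (act (gpow_nat mul one g n) a) - h a) / INR n) (T g)).
Proof.
  intros _ [mul_assoc [mul_1l _]] [act_one act_mul] quasi_aut Hunb.
  destruct (unbounded_action_disp mul one inv act h Hunb) as [g0 [a0 Hg0]].
  destruct (disp_slope_function mul one act h d mul_assoc mul_1l act_one act_mul quasi_aut a0)
    as [T slope_bound].
  assert (Hdefect : defect_le mul T (2 * d)).
  { intros g k. exact (slope_defect mul one act h d act_one act_mul quasi_aut T slope_bound a0 g k). }
  exists T. repeat split.
  - exists (2 * d). exact Hdefect.
  - intros g n. exact (slope_pow mul one act h d mul_assoc mul_1l T slope_bound a0 g n).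
  - exact Hdefect.
  - exists g0. exact (slope_neq0 mul one act h d T slope_bound g0 a0 Hg0).
  - intros a g. exact (slope_limit mul one act h d T slope_bound a g).
Qed.
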